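(* Let $q \geq 5$ be a prime power and let $\mathcal{X}$ be a plane curve of degree $q-1$ defined over $\mathbb{F}_q$ without $\mathbb{F}_q$-linear components with $\mathrm{N}_q(\mathcal{X}) = (q-1)^2$. Then $$\sum_{i=k_0}^{q-1} (i-k_0)(i-q+2)\,a_i = 3(q-1)^2 - 3k_0.$$ In particular, $(q - k_0 - 1)\,a_{q-1} \geq 3(q-1)^2 - 3k_0$.
   Context: $\mathcal{X}(\mathbb{F}_q)=\mathcal{X}\cap\mathbb{P}^2(\mathbb{F}_q)$, $\mathrm{N}_q(\mathcal{X})=\#\mathcal{X}(\mathbb{F}_q)$; ''without $\mathbb{F}_q$-linear components'' means no line defined over $\mathbb{F}_q$ is a component. For $0\le i\le q+1$, $a_i$ is the number of $\mathbb{F}_q$-lines $l$ with $\#(l\cap\mathcal{X}(\mathbb{F}_q))=i$, and $k_0 := \min\{i : a_i \neq 0\}$. *)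

From HB Require Import structures.
From mathcomp Require Import all_boot all_order all_algebra all_field.
From mathcomp Require Import mpoly.
Set Implicit Arguments. Unset Strict Implicit. Unset Printing Implicit Defensive.
Import Order.TTheory GRing.Theory Num.Theory.
Local Open Scope ring_scope.

Section PlaneCurves.
Variable F : finFieldType.

(* Points of P^2(F) (and F-lines, via dual coordinates) are represented by
   the normalized homogeneous coordinate triples: first nonzero coordinate = 1. *)
Definition normalized (v : F * F * F) : bool :=
  let: (x, y, z) := v in
  [|| x == 1, (x == 0) && (y == 1) | [&& x == 0, y == 0 & z == 1]].

Definition P2 : {set F * F * F} := [set v | normalized v].

Definition ev3 (v : F * F * F) : 'I_3 -> F :=
  fun i => [:: v.1.1; v.1.2; v.2]`_i.

Definition curve_pts (f : {mpoly F[3]}) : {set F * F * F} :=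
  [set P in P2 | f.@[ev3 P] == 0].

Definition Nq (f : {mpoly F[3]}) : nat := #|curve_pts f|.

Definition on_line (l P : F * F * F) : bool :=
  l.1.1 * P.1.1 + l.1.2 * P.1.2 + l.2 * P.2 == 0.

Definition linform (l : F * F * F) : {mpoly F[3]} :=
  l.1.1%:MP * 'X_0 + l.1.2%:MP * 'X_1 + l.2%:MP * 'X_2.

Definition no_Fq_linear_component (f : {mpoly F[3]}) : Prop :=
  forall l : F * F * F, l != (0, 0, 0) ->
    ~ exists g : {mpoly F[3]}, f = linform l * g.

Definition plane_curve (d : nat) (f : {mpoly F[3]}) : Prop :=
  f != 0 /\ f \is d.-homog.

Definition line_count (f : {mpoly F[3]}) (l : F * F * F) : nat :=
  #|[set P in curve_pts f | on_line l P]|.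

Definition a_ (f : {mpoly F[3]}) (i : nat) : nat :=
  #|[set l in P2 | line_count f l == i]|.

Definition k0 (f : {mpoly F[3]}) : nat :=
  find (fun i => a_ f i != 0%N) (iota 0 (#|F|.+2)).

End PlaneCurves.

(* A form of degree q - 1 without F_q-linear components has at most q - 1 rational
   points on every F_q-line: its restriction to the line is a binary form of degree q - 1,
   which is nonzero (otherwise the linear form of the line divides it) and so has at most
   q - 1 zeros on P^1.  Double counting incidences in P^2(F_q) gives
     sum a_i = q^2 + q + 1,   sum i a_i = N (q + 1),   sum i (i - 1) a_i = N (N - 1),
   and expanding (i - k0) (i - q + 2) in these moments yields the identity for
   N = (q - 1)^2.  Since a_i = 0 unless k0 <= i <= q - 1, every term with i < q - 1 is
   nonpositive, which gives the inequality. *)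

From HB Require Import structures.
From mathcomp Require Import all_boot all_order all_algebra all_field.
From mathcomp Require Import mpoly.
From mathcomp Require Import ring zify.
Import Order.TTheory GRing.Theory Num.Theory.
Local Open Scope ring_scope.
Set Implicit Arguments. Unset Strict Implicit. Unset Printing Implicit Defensive.

Section MPolyComRing.
Variables (n : nat) (R : comNzRingType).
Implicit Types (p : {mpoly R[n]}).

Lemma meval_dhomogZ p d (a : R) (v : 'I_n -> R) :
  p \is d.-homog -> p.@[fun i => a * v i] = a ^+ d * p.@[v].
Proof.
move=> hp; rewrite !mevalE mulr_sumr; apply: eq_big_seq => m hm.
under eq_bigr do rewrite exprMn.
by rewrite big_split /= prodrXr -mdegE (dhomog_mf hp hm : mdeg m = d) mulrCA.
Qed.

Lemma comp_mpoly_dhomog k p d (t : n.-tuple {mpoly R[k]}) :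
  (forall i, tnth t i \is 1.-homog) -> p \is d.-homog -> p \mPo t \is d.-homog.
Proof.
move=> ht hp; rewrite comp_mpolyEX big_seq; apply: rpred_sum => m hm; apply: rpredZ.
rewrite comp_mpolyX -(dhomog_mf hp hm : mdeg m = d) mdegE.
elim/big_rec2: _ => [|i e x _ hx]; first exact: dhomog1.
by apply: dhomogM => //; have := dhomogMn (m i) (ht i); rewrite mul1n.
Qed.

Lemma comp_mpolyA k l p (s : n.-tuple {mpoly R[k]}) (t : k.-tuple {mpoly R[l]}) :
  (p \mPo s) \mPo t = p \mPo [tuple tnth s i \mPo t | i < n].
Proof.
rewrite [p \mPo s]comp_mpolyEX [RHS]comp_mpolyEX raddf_sum /=; apply: eq_bigr => m _.
rewrite comp_mpolyZ !comp_mpolyX rmorph_prod; congr (_ *: _); apply: eq_bigr => i _.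
by rewrite rmorphXn tnth_mktuple.
Qed.

Lemma comp_mpoly_congr (L p : {mpoly R[n]}) (t : n.-tuple {mpoly R[n]}) :
  (forall i, exists g, 'X_i - tnth t i = L * g) -> exists g, p - (p \mPo t) = L * g.
Proof.
move=> hX.
have congM x x' y y' : (exists g, x - x' = L * g) -> (exists g, y - y' = L * g) ->
    exists g, x * y - x' * y' = L * g.
  case=> [gx ex] [gy ey]; exists (gx * y + x' * gy).
  by rewrite mulrDr mulrA -ex mulrCA -ey; ring.
have congX x x' e : (exists g, x - x' = L * g) -> exists g, x ^+ e - x' ^+ e = L * g.
  move=> hx; elim: e => [|e IH]; first by exists 0; rewrite subrr mulr0.
  by rewrite !exprS; apply: congM.
rewrite comp_mpolyEX {1}(mpolyE p) -sumrB.
elim/big_ind: _ => [|x y [gx ->] [gy ->]|m _].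
- by exists 0; rewrite mulr0.
- by exists (gx + gy); rewrite mulrDr.
rewrite -scalerBr; have [g ->] : exists g, 'X_[m] - ('X_[m] \mPo t) = L * g.
  rewrite comp_mpolyX mpolyXE_id.
  elim/big_rec2: _ => [|i x y _ IH]; first by exists 0; rewrite subrr mulr0.
  exact/congM/IH/congX/hX.
by exists (p@_m *: g); rewrite scalerAr.
Qed.

End MPolyComRing.

Section BinaryForms.
Variable R : idomainType.
Implicit Types (B : {mpoly R[2]}) (d : nat).

Definition p1coords (x : option R) : 'I_2 -> R :=
  fun i => if x is Some t then [:: 1; t]`_i else [:: 0; 1]`_i.

Definition dehomog B : {poly R} := \sum_(m <- msupp B) B@_m *: 'X^(m ord_max).

Lemma mdeg_mnm2 (m : 'X_{1..2}) : mdeg m = (m ord0 + m ord_max)%N.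
Proof. by rewrite mdegE !big_ord_recl big_ord0 addn0; congr (_ + m _)%N; apply: val_inj. Qed.

Lemma mdeg_msupp_dhomog B d m : B \is d.-homog -> m \in msupp B -> (m ord0 + m ord_max)%N = d.
Proof. by move=> hB hm; rewrite -mdeg_mnm2; exact: (dhomog_mf hB hm : mdeg m = d). Qed.

Lemma meval_p1coords B x :
  B.@[p1coords x] =
  \sum_(m <- msupp B) B@_m * (p1coords x ord0 ^+ m ord0 * p1coords x ord_max ^+ m ord_max).
Proof.
rewrite mevalE; apply: eq_bigr => m _; congr (_ * _).
by rewrite !big_ord_recl big_ord0 mulr1; congr (_ * p1coords x _ ^+ m _); apply: val_inj.
Qed.

Lemma horner_dehomog B t : (dehomog B).[t] = B.@[p1coords (Some t)].
Proof.
rewrite meval_p1coords /dehomog horner_sum; apply: eq_bigr => m _.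
by rewrite hornerZ hornerXn /= expr1n mul1r.
Qed.

Lemma coef_dehomog B j : (dehomog B)`_j = \sum_(m <- msupp B | m ord_max == j) B@_m.
Proof. exact: coef_sumMXn. Qed.

Lemma size_dehomog B d : B \is d.-homog -> (size (dehomog B) <= d.+1)%N.
Proof.
move=> hB; apply/leq_sizeP => j hj; rewrite coef_dehomog big_seq_cond big1 // => m.
by case/andP=> /(mdeg_msupp_dhomog hB) e /eqP ej; move: hj; rewrite -ej -e; lia.
Qed.

Lemma coef_dehomog_deg B d : B \is d.-homog -> (dehomog B)`_d = B.@[p1coords None].
Proof.
move=> hB; rewrite coef_dehomog meval_p1coords big_mkcond /=; apply: eq_big_seq => m hm.
have e := mdeg_msupp_dhomog hB hm; rewrite /= expr1n mulr1 expr0n.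
have -> : (m ord_max == d) = (m ord0 == 0%N) by apply/eqP/eqP; lia.
by case: (m ord0 == 0%N); rewrite ?mulr1 ?mulr0.
Qed.

(* A monomial of a binary form of degree d is determined by its second exponent. *)
Lemma dehomog_eq0 B d : B \is d.-homog -> (dehomog B == 0) = (B == 0).
Proof.
move=> hB; apply/eqP/eqP => [B0|->]; last by rewrite /dehomog msupp0 big_nil.
apply/eqP; rewrite -msupp_eq0; case E: (msupp B) => [//|m s].
have hm : m \in msupp B by rewrite E mem_head.
have := congr1 (fun p : {poly R} => p`_(m ord_max)) B0.
rewrite /= coef0 coef_dehomog big_mkcond (bigD1_seq m) ?msupp_uniq //= eqxx.
rewrite big1_seq ?addr0 => [Bm|m' /andP[ne hm']].
  by move: hm; rewrite mcoeff_msupp Bm eqxx.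
case: eqP => // e; case/eqP: ne; apply/mnmP => i.
have := mdeg_msupp_dhomog hB hm; have := mdeg_msupp_dhomog hB hm'.
case: i => [[|[|//]] hi] h h'.
  have -> : Ordinal hi = ord0 by apply: val_inj.
  lia.
have -> : Ordinal hi = ord_max by apply: val_inj.
lia.
Qed.

Lemma dhomog2_zeros B d (s : seq (option R)) :
  B != 0 -> B \is d.-homog -> uniq s -> all (fun x => B.@[p1coords x] == 0) s ->
  (size s <= d)%N.
Proof.
(* Affine zeros are roots of [dehomog B]; a zero at infinity lowers its degree. *)
move=> B0 hB us zs.
have Bd0 : dehomog B != 0 by rewrite (dehomog_eq0 hB).
have Sid : pcancel Some (@id (option R)) by [].
have idS : ocancel (@id (option R)) Some by case.
have roots : all (root (dehomog B)) (pmap id s).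
  apply/allP => t; rewrite (can2_mem_pmap idS Sid) /root horner_dehomog.
  by move/(allP zs).
have := max_poly_roots Bd0 roots (pmap_uniq idS us).
have -> : size s = (size (pmap id s) + (None \in s))%N.
  rewrite size_pmap -(count_uniq_mem _ us) -(count_predC (@isSome R)).
  by congr (_ + _)%N; apply: eq_count; case.
case: (boolP (None \in s)) => [/(allP zs) /= /eqP top|_]; last first.
  by move=> /leq_trans/(_ (size_dehomog hB)); rewrite addn0.
have : (size (dehomog B) <= d)%N.
  move: (size_dehomog hB); rewrite leq_eqVlt => /orP[/eqP sz|//].
  by move: Bd0; rewrite -lead_coef_eq0 lead_coefE sz /= (coef_dehomog_deg hB) top eqxx.
by move=> h1 h2; have := leq_trans h2 h1; rewrite addn1.
Qed.

End BinaryForms.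

Section ProjectivePlane.
Variable F : finFieldType.
Local Notation V := (F * F * F)%type.
Implicit Types (u v l P Q : V) (a : F).

Definition dot u v : F := u.1.1 * v.1.1 + u.1.2 * v.1.2 + u.2 * v.2.
Definition scalev a v : V := (a * v.1.1, a * v.1.2, a * v.2).
Definition addv u v : V := (u.1.1 + v.1.1, u.1.2 + v.1.2, u.2 + v.2).
Definition cross u v : V :=
  (u.1.2 * v.2 - u.2 * v.1.2, u.2 * v.1.1 - u.1.1 * v.2, u.1.1 * v.1.2 - u.1.2 * v.1.1).

Lemma on_lineE l P : on_line l P = (dot l P == 0).
Proof. by []. Qed.

Lemma dotC u v : dot u v = dot v u.
Proof. by rewrite /dot; ring. Qed.

Lemma dotZl a u v : dot (scalev a u) v = a * dot u v.
Proof. by rewrite /dot /=; ring. Qed.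

Lemma dotZr a u v : dot u (scalev a v) = a * dot u v.
Proof. by rewrite /dot /=; ring. Qed.

Lemma dotDr u v w : dot u (addv v w) = dot u v + dot u w.
Proof. by rewrite /dot /=; ring. Qed.

Lemma dot_crossl u v : dot (cross u v) u = 0.
Proof. by rewrite /dot /=; ring. Qed.

Lemma dot_crossr u v : dot (cross u v) v = 0.
Proof. by rewrite /dot /=; ring. Qed.

Lemma crossZl a u v : cross (scalev a u) v = scalev a (cross u v).
Proof. by rewrite /cross /scalev /=; congr (_, _, _); ring. Qed.

Lemma ev3_cross_cross l l' P r :
  ev3 (cross (cross l l') P) r = dot l P * ev3 l' r - dot l' P * ev3 l r.
Proof. by case: r => [[|[|[|//]]] hr]; rewrite /ev3 /dot /=; ring. Qed.

Lemma ev3Z a v r : ev3 (scalev a v) r = a * ev3 v r.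
Proof. by case: r => [[|[|[|]]] //=]. Qed.

Lemma ev3D u v r : ev3 (addv u v) r = ev3 u r + ev3 v r.
Proof. by case: r => [[|[|[|]]] //=]. Qed.

Lemma ev30 r : ev3 (0, 0, 0) r = 0 :> F.
Proof. by case: r => [[|[|[|]]] //=]. Qed.

Lemma ev3_inj u v : ev3 u =1 ev3 v -> u = v.
Proof.
case: u v => [[x y] z] [[x' y'] z'] h.
by move: (h 0) (h 1) (h 2); rewrite /ev3 /= => -> -> ->.
Qed.

Lemma cross_cross_eq0 l l' P :
  dot l P = 0 -> dot l' P = 0 -> cross (cross l l') P = (0, 0, 0).
Proof.
by move=> lP l'P; apply: ev3_inj => r; rewrite ev3_cross_cross lP l'P !mul0r subr0 ev30.
Qed.

Lemma normalizedP v : normalized v ->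
  [\/ v = (1, v.1.2, v.2), v = (0, 1, v.2) | v = (0, 0, 1)].
Proof.
case: v => [[x y] z] /=.
by case/or3P => [/eqP->|/andP[/eqP-> /eqP->]|/and3P[/eqP-> /eqP-> /eqP->]]; constructor.
Qed.

Lemma normalized_neq0 v : normalized v -> v != (0, 0, 0).
Proof. by case/normalizedP => ->; rewrite !xpair_eqE oner_eq0 ?andbF. Qed.

Lemma in_P2 v : (v \in P2 F) = normalized v.
Proof. by rewrite inE. Qed.

Definition lead_coord v : F :=
  if v.1.1 != 0 then v.1.1 else if v.1.2 != 0 then v.1.2 else v.2.

Definition normalize v : V := scalev (lead_coord v)^-1 v.

Lemma lead_coord_eq0 v : (lead_coord v == 0) = (v == (0, 0, 0)).
Proof.
case: v => [[x y] z]; rewrite /lead_coord !xpair_eqE /=.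
case: (eqVneq x 0) => [->|x0] /=; last exact/negbTE.
by case: (eqVneq y 0) => [->|y0] //=; apply/negbTE.
Qed.

Lemma lead_coordZ a v : a != 0 -> lead_coord (scalev a v) = a * lead_coord v.
Proof.
move=> a0; rewrite /lead_coord /= !mulf_eq0 (negbTE a0) /=.
by case: (v.1.1 == 0); case: (v.1.2 == 0).
Qed.

Lemma normalizeZ a v : a != 0 -> normalize (scalev a v) = normalize v.
Proof.
move=> a0; rewrite /normalize lead_coordZ // /scalev /= invfM.
by congr (_, _, _); rewrite mulrACA mulVf ?mul1r.
Qed.

Lemma normalized_normalize v : v != (0, 0, 0) -> normalized (normalize v).
Proof.
case: v => [[x y] z] nz; rewrite /normalize /lead_coord /=.
case: (eqVneq x 0) nz => [->|x0] nz /=; last by rewrite mulVf ?eqxx.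
case: (eqVneq y 0) nz => [->|y0] nz /=; last by rewrite mulr0 mulVf ?eqxx ?orbT.
have z0 : z != 0 by apply: contraNneq nz => ->.
by rewrite !mulr0 mulVf ?eqxx ?orbT.
Qed.

Lemma normalize_id v : normalized v -> normalize v = v.
Proof.
case/normalizedP => ->; rewrite /normalize /lead_coord /scalev /= ?oner_eq0 ?eqxx /=;
  by rewrite invr1 !mul1r.
Qed.

Lemma normalized_scalevE P a v : normalized P -> P = scalev a v -> P = normalize v.
Proof.
move=> hP e; have a0 : a != 0.
  by apply: contra_neq (normalized_neq0 hP) => a0; rewrite e a0 /scalev !mul0r.
by rewrite -(normalize_id hP) e normalizeZ.
Qed.

Lemma cross_normalized_eq0 P Q :
  normalized P -> normalized Q -> cross P Q = (0, 0, 0) -> P = Q.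
Proof.
case/normalizedP=> ->; case/normalizedP=> ->; rewrite /cross /= => -[];
  rewrite !(mul0r, mulr0, mul1r, mulr1, subr0, sub0r).
all: move=> e1 e2 e3; rewrite ?(subr0_eq e1) ?(subr0_eq e2) ?(subr0_eq e3) //.
all: by exfalso; move: e1 e2 e3 => /eqP + /eqP + /eqP; rewrite ?oppr_eq0 ?oner_eq0.
Qed.

Lemma line_through2 P Q : normalized P -> normalized Q -> P != Q ->
  exists l, [/\ normalized l, dot l P = 0 & dot l Q = 0].
Proof.
move=> hP hQ PQ; have c0 : cross P Q != (0, 0, 0).
  by apply: contra_neq PQ; apply: cross_normalized_eq0.
exists (normalize (cross P Q)); split; first exact: normalized_normalize.
  by rewrite dotZl dot_crossl mulr0.
by rewrite dotZl dot_crossr mulr0.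
Qed.

Lemma line_through2_unique P Q l l' : normalized P -> normalized Q -> P != Q ->
  normalized l -> normalized l' -> dot l P = 0 -> dot l Q = 0 ->
  dot l' P = 0 -> dot l' Q = 0 -> l = l'.
Proof.
move=> hP hQ PQ hl hl' lP lQ l'P l'Q; case: (eqVneq l l') => // ll'.
have c0 : cross l l' != (0, 0, 0) by apply: contra_neq ll'; apply: cross_normalized_eq0.
have meet R : normalized R -> dot l R = 0 -> dot l' R = 0 -> normalize (cross l l') = R.
  move=> hR lR l'R; apply: cross_normalized_eq0 => //; first exact: normalized_normalize.
  by rewrite crossZl cross_cross_eq0 // /scalev !mulr0.
by move: PQ; rewrite -(meet P) // -(meet Q) // eqxx.
Qed.

Lemma eq01 : ((0 : F) == 1) = false.
Proof. by rewrite eq_sym oner_eq0. Qed.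

(* For normalized l = (1,b,c), (0,1,c) or (0,0,1): [line_base0 l] and [line_base1 l] span l,
   the coordinates [line_idx0 l] and [line_idx1 l] of a point of l are its coefficients in
   that basis, and [line_off l] is a point with [dot l (line_off l) = 1]. *)
Definition line_base0 l : V := if l.1.1 == 1 then (- l.1.2, 1, 0) else (1, 0, 0).
Definition line_base1 l : V :=
  if l.1.1 == 1 then (- l.2, 0, 1) else if l.1.2 == 1 then (0, - l.2, 1) else (0, 1, 0).
Definition line_off l : V :=
  if l.1.1 == 1 then (1, 0, 0) else if l.1.2 == 1 then (0, 1, 0) else (0, 0, 1).
Definition line_idx0 l : 'I_3 := if l.1.1 == 1 then 1 else 0.
Definition line_idx1 l : 'I_3 := if (l.1.1 == 1) || (l.1.2 == 1) then 2 else 1.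

Lemma ord3P (r : 'I_3) : [\/ r = 0, r = 1 | r = 2].
Proof.
by case: r => [[|[|[|//]]] hr]; [constructor 1 | constructor 2 | constructor 3]; apply: val_inj.
Qed.

Ltac case_line hl :=
  case/normalizedP: hl => ->;
  rewrite /line_base0 /line_base1 /line_off /line_idx0 /line_idx1 /ev3 /= ?eqxx ?eq01 /=.

Lemma line_decomp l P r : normalized l ->
  ev3 P r = ev3 P (line_idx0 l) * ev3 (line_base0 l) r
            + ev3 P (line_idx1 l) * ev3 (line_base1 l) r + dot l P * ev3 (line_off l) r.
Proof.
by case: P => [[x y] z] hl; case: r => [[|[|[|//]]] hr]; case_line hl; rewrite /dot /=; ring.
Qed.

Lemma line_base_coords l : normalized l ->
  [/\ ev3 (line_base0 l) (line_idx0 l) = 1, ev3 (line_base0 l) (line_idx1 l) = 0,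
      ev3 (line_base1 l) (line_idx0 l) = 0 & ev3 (line_base1 l) (line_idx1 l) = 1].
Proof. by move=> hl; case_line hl. Qed.

Lemma dot_line_base l : normalized l -> dot l (line_base0 l) = 0 /\ dot l (line_base1 l) = 0.
Proof. by move=> hl; case_line hl; rewrite /dot /=; split; ring. Qed.

Definition line_vec l (x : option F) : V :=
  addv (scalev (p1coords x ord0) (line_base0 l)) (scalev (p1coords x ord_max) (line_base1 l)).

Definition line_pts l : {set V} := [set P in P2 F | on_line l P].

Definition line_param l P : option F :=
  if ev3 P (line_idx0 l) == 0 then None
  else Some (ev3 P (line_idx1 l) / ev3 P (line_idx0 l)).

Lemma dot_line_vec l x : normalized l -> dot l (line_vec l x) = 0.
Proof. by case/dot_line_base=> h0 h1; rewrite dotDr !dotZr h0 h1 !mulr0 addr0. Qed.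

Lemma ev3_line_vec l x : normalized l ->
  ev3 (line_vec l x) (line_idx0 l) = p1coords x ord0 /\
  ev3 (line_vec l x) (line_idx1 l) = p1coords x ord_max.
Proof.
case/line_base_coords=> h00 h01 h10 h11.
by rewrite !ev3D !ev3Z h00 h01 h10 h11 !mulr0 !mulr1 addr0 add0r.
Qed.

Lemma line_vec_neq0 l x : normalized l -> line_vec l x != (0, 0, 0).
Proof.
move=> hl; have [e0 e1] := ev3_line_vec x hl.
apply/eqP => v0; rewrite v0 !ev30 in e0 e1.
by case: x {v0} e0 e1 => [t|] /= => [/esym/eqP|_ /esym/eqP]; rewrite oner_eq0.
Qed.

Lemma line_paramZ l a x : normalized l -> a != 0 -> line_param l (scalev a (line_vec l x)) = x.
Proof.
move=> hl a0; have [e0 e1] := ev3_line_vec x hl.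
rewrite /line_param !ev3Z e0 e1 mulf_eq0 (negbTE a0) /=.
case: x {e0 e1} => [t|] /=; last by rewrite eqxx.
by rewrite oner_eq0; congr Some; field.
Qed.

Lemma line_param_spec l P : normalized l -> normalized P -> dot l P = 0 ->
  exists2 c, c != 0 & P = scalev c (line_vec l (line_param l P)).
Proof.
move=> hl hP lP.
have dec r : ev3 P r = ev3 P (line_idx0 l) * ev3 (line_base0 l) r
                       + ev3 P (line_idx1 l) * ev3 (line_base1 l) r.
  by rewrite [LHS](line_decomp P r hl) lP mul0r addr0.
rewrite /line_param; case: eqP => [P0|/eqP P0].
  have P1 : ev3 P (line_idx1 l) != 0.
    apply: contra_neq (normalized_neq0 hP) => P1.
    by apply: ev3_inj => r; rewrite dec P0 P1 !mul0r addr0 ev30.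
  exists (ev3 P (line_idx1 l)) => //; apply: ev3_inj => r.
  by rewrite dec ev3Z ev3D !ev3Z P0 /=; ring.
exists (ev3 P (line_idx0 l)) => //; apply: ev3_inj => r.
by rewrite dec ev3Z ev3D !ev3Z /=; field.
Qed.

Lemma line_param_inj l : normalized l -> {in line_pts l &, injective (line_param l)}.
Proof.
move=> hl P Q; rewrite !inE !on_lineE => /andP[hP /eqP lP] /andP[hQ /eqP lQ] e.
have [c _ eP] := line_param_spec hl hP lP; have [c' _ eQ] := line_param_spec hl hQ lQ.
by rewrite (normalized_scalevE hP eP) (normalized_scalevE hQ eQ) e.
Qed.

Definition line_pt l x : V := normalize (line_vec l x).

Lemma line_paramK l : normalized l -> cancel (line_pt l) (line_param l).
Proof.
move=> hl x; apply: line_paramZ => //.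
by rewrite invr_eq0 lead_coord_eq0 line_vec_neq0.
Qed.

Lemma line_pt_in l x : normalized l -> line_pt l x \in line_pts l.
Proof.
move=> hl; rewrite !inE on_lineE normalized_normalize ?line_vec_neq0 //=.
by rewrite dotZr dot_line_vec ?mulr0.
Qed.

Lemma card_line_pts l : normalized l -> #|line_pts l| = #|F|.+1.
Proof.
move=> hl; rewrite -card_option; apply/eqP; rewrite eqn_leq.
rewrite -[X in (X <= _)%N](card_in_imset (line_param_inj hl)) max_card /=.
rewrite -(card_imset _ (can_inj (line_paramK hl))); apply/subset_leq_card/subsetP.
by move=> _ /imsetP[x _ ->]; apply: line_pt_in.
Qed.

Definition line_tuple l : 3.-tuple {mpoly F[2]} :=
  [tuple (ev3 (line_base0 l) r)%:MP * 'X_0 + (ev3 (line_base1 l) r)%:MP * 'X_1 | r < 3].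

Definition restrict l (f : {mpoly F[3]}) : {mpoly F[2]} := f \mPo line_tuple l.

Definition line_embed l : 2.-tuple {mpoly F[3]} := [tuple 'X_(line_idx0 l); 'X_(line_idx1 l)].

Lemma restrict_dhomog l f d : f \is d.-homog -> restrict l f \is d.-homog.
Proof.
apply: comp_mpoly_dhomog => r; rewrite tnth_mktuple !mul_mpolyC.
by apply: rpredD; apply: rpredZ; rewrite dhomogX; apply/eqP/mdeg1.
Qed.

Lemma meval_restrict l f x : (restrict l f).@[p1coords x] = f.@[ev3 (line_vec l x)].
Proof.
rewrite comp_mpoly_meval; apply: meval_eq => r.
by rewrite tnth_mktuple mevalD !mevalM !mevalC !mevalXU ev3D !ev3Z /=; ring.
Qed.

(* Modulo the linear form of l, every variable is a combination of the two variables
   [line_idx0 l] and [line_idx1 l], so f agrees with its restriction pulled back. *)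
Lemma restrict_congr l f : normalized l ->
  exists g, f - (restrict l f \mPo line_embed l) = linform l * g.
Proof.
move=> hl; rewrite comp_mpolyA; apply: comp_mpoly_congr => r.
exists (ev3 (line_off l) r)%:MP; rewrite tnth_mktuple tnth_mktuple comp_mpolyD.
rewrite !rmorphM /= !comp_mpolyC !comp_mpolyXU /linform.
have [->|->|->] := ord3P r; case_line hl;
  by rewrite /line_idx0 /line_idx1 /= ?eqxx ?eq01 ?rmorphN /=; ring.
Qed.

Lemma restrict_eq0 l f : normalized l -> restrict l f = 0 -> exists g, f = linform l * g.
Proof.
move=> hl B0; have [g eg] := restrict_congr f hl.
by exists g; rewrite -eg B0 comp_mpoly0 subr0.
Qed.

Lemma curve_pts_restrict l f d P : normalized l -> f \is d.-homog -> P \in line_pts l ->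
  (P \in curve_pts f) = ((restrict l f).@[p1coords (line_param l P)] == 0).
Proof.
move=> hl hf; rewrite !inE on_lineE => /andP[hP /eqP lP]; rewrite hP /=.
have [c c0 {1}->] := line_param_spec hl hP lP.
rewrite (meval_eq _ (ev3Z c _)) (meval_dhomogZ _ _ hf) meval_restrict.
by rewrite mulf_eq0 expf_eq0 (negbTE c0) andbF.
Qed.

Lemma line_count_le l f d : normalized l -> f \is d.-homog -> no_Fq_linear_component f ->
  (line_count f l <= d)%N.
Proof.
move=> hl hf hnl; set S := [set P in curve_pts f | on_line l P].
have B0 : restrict l f != 0.
  by apply/eqP => /(restrict_eq0 hl); apply: hnl; apply: normalized_neq0.
have SL : S \subset line_pts l.
  by apply/subsetP => P; rewrite !inE => /andP[/andP[-> _] ->].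
rewrite /line_count -/S -(card_in_imset (sub_in2 (subsetP SL) (line_param_inj hl))) cardE.
apply: dhomog2_zeros (restrict_dhomog l hf) (enum_uniq _) _ => //.
apply/allP => x; rewrite mem_enum => /imsetP[P PS ->].
by rewrite -(curve_pts_restrict hl hf (subsetP SL P PS)); move: PS; rewrite inE => /andP[].
Qed.

End ProjectivePlane.

Lemma Posz_sum (I : finType) (A : {pred I}) (c : I -> nat) :
  ((\sum_(i in A) c i)%N)%:Z = \sum_(i in A) (c i)%:Z.
Proof. exact: (big_morph Posz PoszD). Qed.

Lemma Posz_mulpred (n : nat) : ((n * n.-1)%N)%:Z = n%:Z * (n%:Z - 1).
Proof. by case: n => [|n] //=; rewrite PoszM -addn1 PoszD addrK. Qed.

Lemma card_set_in_sum (T : finType) (A : {set T}) (p : pred T) :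
  #|[set x in A | p x]| = (\sum_(x in A) p x)%N.
Proof. by rewrite -sum1dep_card big_mkcondr /=; apply: eq_bigr => x _; case: (p x). Qed.

Section Counting.
Variable F : finFieldType.
Local Notation V := (F * F * F)%type.
Local Notation q := #|F|.
Implicit Types (l P Q : V) (f : {mpoly F[3]}).

Lemma card_P2 : #|P2 F| = (q ^ 2 + q + 1)%N.
Proof.
pose S1 : {set V} := setX (setX [set 1] setT) setT.
pose S2 : {set V} := setX (setX [set 0] [set 1]) setT.
pose S3 : {set V} := [set (0, 0, 1)].
have -> : P2 F = S1 :|: (S2 :|: S3).
  apply/setP => [[[x y] z]]; rewrite !inE /= !xpair_eqE.
  by case: (x == 1); case: (x == 0); case: (y == 1); case: (y == 0); case: (z == 1).
rewrite cardsU (cardsU S2).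
have -> : S2 :&: S3 = set0.
  apply/setP => [[[x y] z]]; rewrite !inE /= !xpair_eqE.
  by case: (y == 1) / eqP => [->|]; rewrite ?andbF // oner_eq0 !andbF.
have -> : S1 :&: (S2 :|: S3) = set0.
  apply/setP => [[[x y] z]]; rewrite !inE /= !xpair_eqE.
  by case: (x == 1) / eqP => [->|]; rewrite ?andbF // oner_eq0 !andbF.
rewrite !cards0 !subn0 !cardsX !cards1 !cardsT !mul1n.
by rewrite expnS expn1 addnA.
Qed.

Lemma card_lines_through P : normalized P -> #|[set l in P2 F | on_line l P]| = q.+1.
Proof.
move=> hP; rewrite -(card_line_pts hP); apply: eq_card => l.
by rewrite !inE !on_lineE dotC.
Qed.

Lemma card_lines_through2 P Q : normalized P -> normalized Q -> P != Q ->
  #|[set l in P2 F | on_line l P && on_line l Q]| = 1%N.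
Proof.
move=> hP hQ PQ; have [l0 [hl0 l0P l0Q]] := line_through2 hP hQ PQ.
rewrite -(cards1 l0); apply: eq_card => l; rewrite !inE !on_lineE.
apply/idP/eqP => [/and3P[hl /eqP lP /eqP lQ]|->]; last by rewrite hl0 l0P l0Q eqxx.
exact: line_through2_unique hP hQ PQ hl hl0 lP lQ l0P l0Q.
Qed.

Lemma curve_pts_normalized f P : P \in curve_pts f -> normalized P.
Proof. by rewrite !inE => /andP[]. Qed.

Lemma sum_line_count f : (\sum_(l in P2 F) line_count f l = Nq f * q.+1)%N.
Proof.
under eq_bigr do rewrite /line_count card_set_in_sum.
rewrite exchange_big /= /Nq -sum_nat_const; apply: eq_bigr => P hP.
by rewrite -card_set_in_sum card_lines_through // (curve_pts_normalized hP).
Qed.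

Lemma sum_line_count_pairs f :
  (\sum_(l in P2 F) line_count f l * (line_count f l).-1 = Nq f * (Nq f).-1)%N.
Proof.
set C := curve_pts f.
have pairs l : (line_count f l * (line_count f l).-1 =
    \sum_(P in C) \sum_(Q in C) (on_line l P && on_line l Q && (P != Q)))%N.
  rewrite /line_count -/C card_set_in_sum big_distrl /=; apply: eq_bigr => P hP.
  case lP: (on_line l P); last by rewrite mul0n big1 // => Q _; rewrite andbF.
  rewrite mul1n -!card_set_in_sum (cardsD1 P) inE hP lP /=.
  by apply: eq_card => Q; rewrite !inE /= [Q == P]eq_sym andbC andbA.
under eq_bigr do rewrite pairs; rewrite exchange_big /= /Nq -/C -sum_nat_const.
apply: eq_bigr => P hP; rewrite exchange_big (cardsD1 P C) hP add1n /=.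
have -> : C :\ P = [set Q in C | P != Q] by apply/setP => Q; rewrite !inE eq_sym andbC.
rewrite card_set_in_sum; apply: eq_bigr => Q hQ.
case: (eqVneq P Q) => [<-|PQ]; first by rewrite big1 // => l _; rewrite andbF.
rewrite /= -(card_lines_through2 (curve_pts_normalized hP) (curve_pts_normalized hQ) PQ).
by rewrite card_set_in_sum; apply: eq_bigr => l _; rewrite andbT.
Qed.

Lemma k0_le_line_count f l : l \in P2 F -> (k0 f <= line_count f l)%N.
Proof.
move=> hl; rewrite leqNgt; apply/negP => lt.
have lc_le : (line_count f l < q.+2)%N.
  rewrite ltnS -(card_line_pts (l := l)) -?in_P2 //; apply/subset_leq_card/subsetP => P.
  by rewrite !inE => /andP[/andP[-> _] ->].
have := before_find 0%N lt; rewrite nth_iota ?size_iota // add0n /a_ => /negbFE.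
by rewrite cards_eq0 => /eqP/setP/(_ l); rewrite in_set0 in_set hl eqxx.
Qed.

Lemma sum_a_line_count f (G : nat -> int) m n :
  (forall l, l \in P2 F -> m <= line_count f l < n)%N ->
  \sum_(m <= i < n) G i * (a_ f i)%:Z = \sum_(l in P2 F) G (line_count f l).
Proof.
move=> hlc; under eq_bigr do rewrite /a_ card_set_in_sum Posz_sum mulr_sumr.
rewrite exchange_big /=; apply: eq_bigr => l hl.
rewrite (bigD1_seq (line_count f l)) ?iota_uniq ?mem_index_iota ?hlc //= eqxx mulr1.
by rewrite big1 ?addr0 // => i ne; rewrite eq_sym (negbTE ne) mulr0.
Qed.

End Counting.

(* Expanding (c - k)(c - q + 2) = c(c - 1) + (3 - k - q) c + k (q - 2), the sum only
   depends on the number of terms and on the first two factorial moments of c. *)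
Lemma sum_quadratic_counts (I : finType) (A : {set I}) (c : I -> nat) (q k : nat) :
  (0 < q)%N -> #|A| = (q ^ 2 + q + 1)%N ->
  (\sum_(i in A) c i = q.-1 ^ 2 * q.+1)%N ->
  (\sum_(i in A) c i * (c i).-1 = q.-1 ^ 2 * (q.-1 ^ 2).-1)%N ->
  \sum_(i in A) ((c i)%:Z - k%:Z) * ((c i)%:Z - q%:Z + 2) = 3 * (q%:Z - 1) ^+ 2 - 3 * k%:Z.
Proof.
move=> q0 cardA sum1 sum2.
have -> : \sum_(i in A) ((c i)%:Z - k%:Z) * ((c i)%:Z - q%:Z + 2) =
    \sum_(i in A) (((c i * (c i).-1)%N)%:Z + (3 - k%:Z - q%:Z) * (c i)%:Z + k%:Z * (q%:Z - 2)).
  by apply: eq_bigr => i _; rewrite Posz_mulpred; ring.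
rewrite !big_split /= -Posz_sum sum2 -mulr_sumr -Posz_sum sum1 sumr_const cardA.
rewrite Posz_mulpred -[_ *+ _]mulr_natr natz.
case: q q0 {cardA sum1 sum2} => [//|p] _ /=; ring.
Qed.

Lemma weighted_sum_le_last (a : nat -> nat) (k q : nat) : (k < q)%N ->
  \sum_(k <= i < q) (i%:Z - k%:Z) * (i%:Z - q%:Z + 2) * (a i)%:Z
    <= (q%:Z - k%:Z - 1) * (a q.-1)%:Z.
Proof.
case: q => [//|p] kp; rewrite big_nat_recr //= -[X in _ <= X]add0r.
apply: lerD; last by rewrite le_eqVlt; apply/orP; left; apply/eqP; ring.
rewrite big_nat_cond sumr_le0 // => i /andP[/andP[ki ip] _].
by apply: mulr_le0_ge0 => //; apply: mulr_ge0_le0; lia.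
Qed.

Theorem lemma3p14 (F : finFieldType) (f : {mpoly F[3]}) :
  (5 <= #|F|)%N ->
  plane_curve #|F|.-1 f ->
  no_Fq_linear_component f ->
  Nq f = (#|F|.-1 ^ 2)%N ->
  let q := #|F| in
  let k := k0 f in
  (\sum_(k <= i < q) ((i%:Z - k%:Z) * (i%:Z - q%:Z + 2) * (a_ f i)%:Z)
     = 3 * (q%:Z - 1) ^+ 2 - 3 * k%:Z)
  /\ ((q%:Z - k%:Z - 1) * (a_ f q.-1)%:Z >= 3 * (q%:Z - 1) ^+ 2 - 3 * k%:Z).
Proof.
move=> _ [_ hf] hnl hN q k.
have q0 : (0 < q)%N by apply/card_gt0P; exists 0.
have lc_bounds l : l \in P2 F -> (k <= line_count f l < q)%N.
  move=> hl; rewrite k0_le_line_count //=; rewrite in_P2 in hl.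
  by have := line_count_le hl hf hnl; lia.
have kq : (k < q)%N.
  have [l0 hl0] : exists l0, l0 \in P2 F by apply/card_gt0P; rewrite card_P2 addn1.
  by have /andP[] := lc_bounds _ hl0; apply: leq_ltn_trans.
have ident : \sum_(k <= i < q) (i%:Z - k%:Z) * (i%:Z - q%:Z + 2) * (a_ f i)%:Z
    = 3 * (q%:Z - 1) ^+ 2 - 3 * k%:Z.
  rewrite (sum_a_line_count (fun i => (i%:Z - k%:Z) * (i%:Z - q%:Z + 2)) lc_bounds).
  apply: sum_quadratic_counts (card_P2 F) _ _ => //.
    by rewrite sum_line_count hN.
  by rewrite sum_line_count_pairs hN.
by split=> //; rewrite -ident; apply: weighted_sum_le_last.
Qed.
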